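(* Let $a,b,c,e\in\mathbb Z$ with $a\neq0$, $e>0$, such that $h_3(j)=aj^3+bj^2+cj+e$ satisfies $h_3(j)\ge0$ for all integers $j\ge0$ (so $h_3\in\mathcal H_0$). Let $\alpha=a/e$, $\beta=b/e$, $\gamma=c/e$ and $$f(x)=\tfrac12x^2-\left(\alpha+\beta+\gamma+\tfrac32\right)x+(9\alpha+5\beta+3\gamma+2).$$ Assume $\alpha+\beta+\gamma\ge 2$. If there exists an integer $d$ with $3\le d\le c(h_3)+1$ and $f(d)<0$, then $\operatorname{hdepth}(h_3)<d$.
   Context: Let $\mathcal H_0$ denote the set of functions $h:\mathbb Z_{\ge 0}\to\mathbb Z_{\ge 0}$ with $h(0)>0$. For $h\in\mathcal H_0$ and integers $0\le k\le d$, put $\beta_k^d(h)=\sum_{j=0}^k(-1)^{k-j}\binom{d-j}{k-j}h(j)$. The Hilbert depth of $h$ is $\operatorname{hdepth}(h)=\max\{d\in\mathbb Z_{\ge0}:\ \beta_k^d(h)\ge 0\text{ for all }0\le k\le d\}$; this set contains $d=0$ and is known to be bounded above by $c(h):=\lfloor h(1)/h(0)\rfloor$, so the maximum exists. *)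

From mathcomp Require Import all_boot all_order all_algebra.
Set Implicit Arguments. Unset Strict Implicit. Unset Printing Implicit Defensive.
Import Order.TTheory GRing.Theory Num.Theory.
Local Open Scope ring_scope.

(* beta_k^d(h) = sum_{j=0}^k (-1)^(k-j) C(d-j, k-j) h(j), computed in int.
   Only used with k <= d, so the truncated subtractions d-j, k-j are exact. *)
Definition hbeta (h : nat -> nat) (d k : nat) : int :=
  \sum_(j < k.+1) (-1) ^+ (k - j)%N * ('C(d - j, k - j))%:Z * (h j)%:Z.

Definition hdepth_ok (h : nat -> nat) (d : nat) : bool :=
  [forall k : 'I_d.+1, 0 <= hbeta h d k].

Definition cbound (h : nat -> nat) : nat := (h 1 %/ h 0)%N.

(* Hilbert depth: the maximum admissible d. The admissible set is known to be
   contained in [0, c(h)] (and to contain 0), so the max over d <= c(h)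
   is the max of the whole set. *)
Definition hdepth (h : nat -> nat) : nat :=
  (\max_(d < (cbound h).+1 | hdepth_ok h d) d)%N.

From mathcomp Require Import all_boot all_order all_algebra ring zify.
Import Order.TTheory GRing.Theory Num.Theory.
Set Implicit Arguments. Unset Strict Implicit. Unset Printing Implicit Defensive.
Local Open Scope ring_scope.

(* Pascal's rule gives beta_{k+1}^d = beta_{k+1}^{d+1} + beta_k^d, so admissible depths
   are closed downwards and hdepth h < d as soon as d itself is not admissible.  For the
   cubic h_3 the coefficient beta_2^d equals e f(d), hence f(d) < 0 rules out depth d. *)

Lemma hbeta0 (h : nat -> nat) (d : nat) : hbeta h d 0 = (h 0%N)%:Z.
Proof. by rewrite /hbeta big_ord1 /= bin0 mulr1 mul1r. Qed.

Lemma hbetaS (h : nat -> nat) (d k : nat) : (k < d)%N ->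
  hbeta h d k.+1 = hbeta h d.+1 k.+1 + hbeta h d k.
Proof.
move=> lt_kd; rewrite /hbeta big_ord_recr [in X in _ = X + _]big_ord_recr /=.
rewrite !subnn !bin0 addrAC -big_split /=; congr (_ + _); apply: eq_bigr => j _.
have le_jk : (j <= k)%N := ltn_ord j.
have le_jd : (j <= d)%N := leq_trans le_jk (ltnW lt_kd).
by rewrite !subSn // binS exprS PoszD; ring.
Qed.

Lemma hdepth_ok_hbeta_ge0 (h : nat -> nat) (d k : nat) :
  hdepth_ok h d -> (k <= d)%N -> 0 <= hbeta h d k.
Proof. by move=> /forallP ok le_kd; have := ok (inord k); rewrite inordK. Qed.

Lemma hdepth_ok_pred (h : nat -> nat) (d : nat) :
  hdepth_ok h d.+1 -> hdepth_ok h d.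
Proof.
move=> ok; apply/forallP => -[k /= le_kd]; rewrite ltnS in le_kd.
elim: k le_kd => [|k IHk] lt_kd; first by rewrite hbeta0.
rewrite hbetaS // addr_ge0 ?IHk 1?ltnW //.
exact: hdepth_ok_hbeta_ge0 ok (leqW lt_kd).
Qed.

Lemma hdepth_ok_le (h : nat -> nat) (m n : nat) :
  (m <= n)%N -> hdepth_ok h n -> hdepth_ok h m.
Proof.
move=> /subnKC <-; elim: (n - m)%N => [|k IHk]; first by rewrite addn0.
by rewrite addnS => /hdepth_ok_pred.
Qed.

Lemma hdepth_lt (h : nat -> nat) (d : nat) : ~~ hdepth_ok h d -> (hdepth h < d)%N.
Proof.
case: d => [|d] not_ok.
  by case/negP: not_ok; apply/forallP => k; rewrite (ord1 k) hbeta0.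
rewrite ltnS; apply/bigmax_leqP => i ok_i; rewrite leqNgt; apply/negP => lt_di.
by case/negP: not_ok; exact: hdepth_ok_le lt_di ok_i.
Qed.

Lemma hbeta2E (h : nat -> nat) (d : nat) :
  hbeta h d 2 = 'C(d, 2)%:Z * (h 0%N)%:Z - d.-1%:Z * (h 1%N)%:Z + (h 2%N)%:Z.
Proof.
rewrite /hbeta !big_ord_recr big_ord0 /= !subn0 subnn !subn1 bin0 /= bin1.
by ring.
Qed.

Definition depth_quadratic (al be ga x : rat) : rat :=
  1 / 2 * x ^+ 2 - (al + be + ga + 3 / 2) * x + (9 * al + 5 * be + 3 * ga + 2).

Lemma hbeta2_cubic (a b c e : int) (h : nat -> nat) (d : nat) :
  e != 0 -> (0 < d)%N ->
  (forall j : nat, (h j)%:Z = a * (j%:Z) ^+ 3 + b * (j%:Z) ^+ 2 + c * j%:Z + e) ->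
  (hbeta h d 2)%:~R =
    e%:~R * depth_quadratic (a%:~R / e%:~R) (b%:~R / e%:~R) (c%:~R / e%:~R) d%:R.
Proof.
case: d => // n nz_e _ hh.
have h0 : (h 0%N)%:Z = e by rewrite hh; ring.
have h1 : (h 1%N)%:Z = a + b + c + e by rewrite hh; ring.
have h2 : (h 2%N)%:Z = 8 * a + 4 * b + 2 * c + e by rewrite hh; ring.
have bin2r : ('C(n.+1, 2)%:R : rat) = n.+1%:R * n%:R / 2.
  have bin2n : (n.+1 * n = 2 * 'C(n.+1, 2))%N by rewrite -mul_bin_diag bin1.
  by rewrite -natrM bin2n natrM; field.
rewrite hbeta2E h0 h1 h2 !(intrD, intrN, intrM) -!pmulrn bin2r /depth_quadratic.
by field; rewrite intr_eq0.
Qed.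

Theorem lemma3p2 (a b c e : int) (h : nat -> nat)
  (ha : a != 0) (he : 0 < e)
  (hh : forall j : nat,
      (h j)%:Z = a * (j%:Z) ^+ 3 + b * (j%:Z) ^+ 2 + c * j%:Z + e)
  (hsum : 2 <= (a%:~R / e%:~R) + (b%:~R / e%:~R) + (c%:~R / e%:~R) :> rat)
  (d : nat) (hd3 : (3 <= d)%N) (hdc : (d <= cbound h + 1)%N)
  (hf : let al : rat := a%:~R / e%:~R in
        let be : rat := b%:~R / e%:~R in
        let ga : rat := c%:~R / e%:~R in
        (1 / 2) * (d%:R) ^+ 2 - (al + be + ga + 3 / 2) * d%:R
          + (9 * al + 5 * be + 3 * ga + 2) < 0) :
  (hdepth h < d)%N.
Proof.
have f_neg : depth_quadratic (a%:~R / e%:~R) (b%:~R / e%:~R) (c%:~R / e%:~R) d%:R < 0.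
  exact: hf.
apply: hdepth_lt; apply/negP => ok.
have beta2_ge0 : 0 <= hbeta h d 2 by apply: hdepth_ok_hbeta_ge0 ok _; lia.
have nz_e : e != 0 by rewrite gt_eqF.
move: beta2_ge0; rewrite -(ler0z rat) (hbeta2_cubic nz_e _ hh); last lia.
by rewrite pmulr_rge0 ?ltr0z // leNgt f_neg.
Qed.
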